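(* Let $P$ be a connected shrub on a finite set $I$ with at least two elements, and let $a\neq a'$ be two vertices of height $0$ in $P$. Then there exists a vertex $b$ covering both $a$ and $a'$.
   Context: A shrub $P$ on a finite set $I$ is a set $E$ of edges (unordered pairs $\{i,j\}$ of distinct elements of $I$) together with a height function $h_P:I\to\mathbb{N}$. Say that $j$ covers $i$ if $\{i,j\}\in E$ and $h_P(j)=h_P(i)+1$. The axioms are: (1) if $\{i,j\}\in E$ then $h_P(i)=h_P(j)\pm 1$; (2) if $h_P(j)>0$ then there is an edge $\{i,j\}$ with $h_P(i)=h_P(j)-1$; (3) there are no four distinct vertices $a,b,c,d$ such that $a$ covers $b$ and $c$, $c$ covers $d$, and $\{b,d\}\notin E$; (4) there are no five distinct vertices $a,b,c,d,e$ such that $a$ covers $c$ and $d$, $b$ covers $d$ and $e$, $\{a,e\}\notin E$ and $\{b,c\}\notin E$. A shrub is connected if its underlying graph $(I,E)$ is connected. *)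

From mathcomp Require Import all_boot.
Set Implicit Arguments. Unset Strict Implicit. Unset Printing Implicit Defensive.

(* A shrub on a finite set I: an edge set given as a relation E : rel I that is
   symmetric and irreflexive (unordered pairs of distinct elements), together
   with a height function h : I -> nat. *)

Definition covers (I : finType) (E : rel I) (h : I -> nat) (j i : I) : bool :=
  E i j && (h j == (h i).+1).

Definition is_shrub (I : finType) (E : rel I) (h : I -> nat) : Prop :=
  (forall i j, E i j = E j i) /\
  (forall i, ~~ E i i) /\
  (forall i j, E i j -> h i = (h j).+1 \/ h j = (h i).+1) /\
  (forall j, 0 < h j -> exists i, E i j /\ (h i).+1 = h j) /\
  (forall a b c d : I, uniq [:: a; b; c; d] ->
     covers E h a b -> covers E h a c -> covers E h c d -> E b d) /\
  (forall a b c d e : I, uniq [:: a; b; c; d; e] ->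
     covers E h a c -> covers E h a d -> covers E h b d -> covers E h b e ->
     E a e \/ E b c).

Definition shrub_connected (I : finType) (E : rel I) : Prop :=
  forall x y : I, connect E x y.

From mathcomp Require Import all_boot.
Set Implicit Arguments. Unset Strict Implicit. Unset Printing Implicit Defensive.

(* A shortest path from a to a' is duplicate-free and starts at height 0, so
   it can be shortened as soon as it contains one of two patterns: two
   consecutive climbs followed later by a descent (axiom (3) at the first peak
   joins its foot to the vertex after the peak), or heights 0, 1, 0, 1, 0
   (axiom (4) joins the first 1 to the last 0, or the second 1 to the first 0).
   A path from height 0 to height 0 avoiding both patterns is a, v, a', and
   then v covers a and a'. *)

Definition has_shortcut (I : finType) (E : rel I) (x : I) (p : seq I) : Prop :=
  exists q, [/\ path E x q, last x q = last x p & size q < size p].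

Lemma has_shortcut_cons (I : finType) (E : rel I) (u v : I) (p : seq I) :
  E u v -> has_shortcut E v p -> has_shortcut E u (v :: p).
Proof. by move=> Euv [q [pq lq sq]]; exists (v :: q); rewrite /= Euv. Qed.

Ltac uniq_from Hu :=
  move: Hu; rewrite /= !inE !negb_or => Hu;
  repeat match goal with H : is_true (_ && _) |- _ => case/andP: H => ? ? end;
  rewrite /= ?inE ?negb_or; do !(apply/andP; split) => //; rewrite eq_sym.

Section ShrubPaths.

Variables (I : finType) (E : rel I) (h : I -> nat).
Hypothesis shrubEh : is_shrub E h.

Lemma shrub_sym : symmetric E.
Proof. by case: shrubEh. Qed.

Lemma shrub_edge_height i j : E i j -> h i = (h j).+1 \/ h j = (h i).+1.
Proof. by case: shrubEh => _ [_ [edge_height _]]; apply: edge_height. Qed.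

Lemma shrub_diamond a b c d : uniq [:: a; b; c; d] ->
  covers E h a b -> covers E h a c -> covers E h c d -> E b d.
Proof. by case: shrubEh => _ [_ [_ [_ [diamond _]]]]; apply: diamond. Qed.

Lemma shrub_zigzag a b c d e : uniq [:: a; b; c; d; e] ->
  covers E h a c -> covers E h a d -> covers E h b d -> covers E h b e ->
  E a e \/ E b c.
Proof. by case: shrubEh => _ [_ [_ [_ [_ zigzag]]]]; apply: zigzag. Qed.

Lemma coversE i j : E i j -> h j = (h i).+1 -> covers E h j i.
Proof. by move=> Eij hj; rewrite /covers Eij hj eqxx. Qed.

Lemma covers_sym i j : E i j -> h i = (h j).+1 -> covers E h i j.
Proof. by rewrite shrub_sym; apply: coversE. Qed.

Lemma edge_from_ground i j : E i j -> h i = 0 -> h j = 1.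
Proof. by case/shrub_edge_height=> -> // ->. Qed.

Lemma edge_from_level_one i j : E i j -> h i = 1 -> h j = 0 \/ h j = 2.
Proof. by case/shrub_edge_height=> ->; [case=> ->; left | move=> ->; right]. Qed.

Lemma ascending_path_shortcut r u v w :
  path E u (v :: w :: r) -> uniq (u :: v :: w :: r) ->
  covers E h w v -> covers E h v u -> h (last u (v :: w :: r)) < h w ->
  has_shortcut E u (v :: w :: r).
Proof.
elim: r u v w => [|x r IHr] u v w; first by rewrite ltnn.
move=> /and4P[Euv Evw Ewx pathr] uniq_p Cwv Cvu hlast.
case: (shrub_edge_height Ewx) => hwx.
- have Exu : E x u.
    by apply: (shrub_diamond _ (covers_sym Ewx hwx) Cwv Cvu); uniq_from uniq_p.
  by exists (x :: r); rewrite /= shrub_sym Exu.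
- apply: has_shortcut_cons => //; apply: IHr => //.
  + by rewrite /= Evw Ewx.
  + by case/andP: uniq_p.
  + exact: coversE.
  + by rewrite hwx ltnW.
Qed.

Lemma ground_path_shortcut a p :
  path E a p -> uniq (a :: p) -> h a = 0 -> h (last a p) = 0 -> 2 < size p ->
  has_shortcut E a p.
Proof.
case: p => [|v [|w [|x r]]] // pathp uniq_p ha hlast _.
case/and4P: (pathp) => Eav Evw Ewx pathr.
have hv := edge_from_ground Eav ha.
have Cva : covers E h v a by apply: (coversE Eav); rewrite hv ha.
case: (edge_from_level_one Evw hv) => hw.
- have hx := edge_from_ground Ewx hw.
  have Cxw : covers E h x w by apply: (coversE Ewx); rewrite hx hw.
  have Cvw : covers E h v w by apply: (covers_sym Evw); rewrite hv hw.
  case: r {pathp} pathr uniq_p hlast => [|y r] pathr uniq_p hlast; first by rewrite hlast in hx.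
  case/andP: pathr => Exy pathr.
  case: (edge_from_level_one Exy hx) => hy.
  + have Cxy : covers E h x y by apply: (covers_sym Exy); rewrite hx hy.
    have [Evy | Exa] : E v y \/ E x a.
      by apply: (shrub_zigzag _ Cva Cvw Cxw Cxy); uniq_from uniq_p.
    * by exists [:: v, y & r]; rewrite /= Eav Evy.
    * by exists [:: x, y & r]; rewrite /= shrub_sym Exa Exy.
  + do 2!apply: has_shortcut_cons => //.
    apply: ascending_path_shortcut.
    * by rewrite /= Ewx Exy.
    * by case/and3P: uniq_p.
    * by apply: (coversE Exy); rewrite hy hx.
    * exact: Cxw.
    * by rewrite /= in hlast *; rewrite hlast hy.
- apply: ascending_path_shortcut => //; first by apply: (coversE Evw); rewrite hw hv.
  by rewrite hlast hw.
Qed.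

Lemma ground_vertices_common_cover a a' p :
  a != a' -> h a = 0 -> h a' = 0 -> path E a p -> last a p = a' ->
  exists b, covers E h b a /\ covers E h b a'.
Proof.
move=> neq_aa' ha ha'; have [n] := ubnP (size p).
elim: n p => // n IHn p lt_p_n pathp; case: (shortenP pathp) => q pathq uniq_q sub_qp.
have le_qp : size q <= size p by apply: uniq_leq_size => //; case/andP: uniq_q.
move=> lastq; case: (ltnP 2 (size q)) => [long_q | short_q].
  have [q' [pathq' lastq' lt_q'q]] := ground_path_shortcut pathq uniq_q ha
    (etrans (congr1 h lastq) ha') long_q.
  apply: (IHn q' _ pathq'); last by rewrite lastq'.
  exact: leq_trans lt_q'q (leq_trans le_qp lt_p_n).
case: q short_q {uniq_q sub_qp le_qp} pathq lastq => [|v [|w []]] //= _.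
- by move=> _ eq_aa'; rewrite eq_aa' eqxx in neq_aa'.
- move=> /andP[Eaa' _] eq_aa'; rewrite -eq_aa' in ha'.
  by move: (edge_from_ground Eaa' ha); rewrite ha'.
- case/and3P=> Eav Evw _ eq_wa'; subst a'.
  have hv := edge_from_ground Eav ha.
  by exists v; split; [apply: (coversE Eav) | apply: (covers_sym Evw)]; rewrite hv ?ha ?ha'.
Qed.

End ShrubPaths.

Theorem mainTheorem4 (I : finType) (E : rel I) (h : I -> nat) :
  is_shrub E h -> shrub_connected E -> 1 < #|I| ->
  forall a a' : I, a != a' -> h a = 0 -> h a' = 0 ->
  exists b : I, covers E h b a /\ covers E h b a'.
Proof.
move=> shrubEh connectedE _ a a' neq_aa' ha ha'.
have /connectP[p pathp lastp] := connectedE a a'.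
exact: (ground_vertices_common_cover shrubEh neq_aa' ha ha' pathp (esym lastp)).
Qed.
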